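(* Let $\Gamma_M$ ($M>0$) be a family of nonatomic routing games with a single OD pair, sharing the same graph, path set $\mathcal P$ and edge cost functions $(c_e)_{e\in\mathcal E}$, where $M$ is the traffic demand of the OD pair. Suppose there is a function $c:(0,\infty)\to(0,\infty)$, regularly varying at $\infty$, which is a benchmark for $(c_e)_{e\in\mathcal E}$ at $\infty$, and that the network is tight relative to $c$ at $\infty$, i.e. $0<\alpha<\infty$ where $\alpha=\min_{p\in\mathcal P}\max_{e\in p}\alpha_e$ and $\alpha_e=\lim_{x\to \infty}c_e(x)/c(x)$. Then $\lim_{M\to \infty}\mathrm{PoA}(\Gamma_M)=1$.
   Context: A nonatomic routing game consists of: a finite directed multigraph with edge set $\mathcal E$; a finite set $\mathcal I$ of origin–destination (OD) pairs, each $i\in\mathcal I$ with a demand $m^i\ge 0$ and a nonempty finite set $\mathcal P^i$ of paths from its origin to its destination, the sets $\mathcal P^i$ pairwise disjoint, $\mathcal P=\bigcup_i\mathcal P^i$; and for each edge $e$ a continuous nondecreasing cost function $c_e:[0,\infty)\to[0,\infty)$. The total inflow is $M=\sum_i m^i>0$. A feasible flow is $f\in\mathbb R_+^{\mathcal P}$ with $\sum_{p\in\mathcal P^i}f_p=m^i$ for all $i$; it induces loads $x_e=\sum_{p\ni e}f_p$ and path costs $c_p(f)=\sum_{e\in p}c_e(x_e)$. A Wardrop equilibrium is a feasible flow $f^*$ with $c_p(f^* )\le c_{p'}(f^* )$ for all $i$ and all $p,p'\in\mathcal P^i$ with $f^*_p>0$. The social cost is $L(x)=\sum_e x_e c_e(x_e)$;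 $\mathrm{Opt}(\Gamma)$ is its minimum over loads induced by feasible flows, $\mathrm{Eq}(\Gamma)=L(x^* )$ for the load of a Wardrop equilibrium (all equilibria have the same social cost), and $\mathrm{PoA}(\Gamma)=\mathrm{Eq}(\Gamma)/\mathrm{Opt}(\Gamma)$; it is assumed throughout that $\mathrm{Opt}(\Gamma)>0$ (if $\mathrm{Opt}=0$ one sets $\mathrm{PoA}=1$). For $\omega\in\{0,\infty\}$, $g:(0,\infty)\to(0,\infty)$ is regularly varying at $\omega$ if $\lim_{t\to\omega}g(tx)/g(t)$ exists and is finite and nonzero for every $x>0$. A function $c$ regularly varying at $\omega$ is a benchmark for the costs $(c_e)$ at $\omega$ if the limit $\alpha_e=\lim_{x\to\omega}c_e(x)/c(x)\in[0,\infty]$ exists for every edge $e$. *)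

From HB Require Import structures.
From mathcomp Require Import all_boot all_order all_algebra.
From mathcomp Require Import all_classical all_reals all_analysis.
Set Implicit Arguments. Unset Strict Implicit. Unset Printing Implicit Defensive.
Import Order.TTheory GRing.Theory Num.Theory.
Import numFieldNormedType.Exports.
Local Open Scope classical_set_scope.
Local Open Scope ring_scope.

(* A sequence of edges s of a directed multigraph (edges E, endpoints src/tgt
   in the vertex type V) is a (simple) path from o to d: the i-th edge starts
   where the (i-1)-th ends (the first at o), the last one ends at d, and no
   vertex is visited twice. *)
Definition is_od_path (V E : finType) (src tgt : E -> V) (o d : V) (s : seq E) :=
  [/\ map src s = belast o (map tgt s), last o (map tgt s) = d
    & uniq (o :: map tgt s)].

Section Routing.
Variables (R : realType) (E P : finType) (pth : P -> seq E) (ce : E -> R -> R).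

Definition load (f : P -> R) (e : E) : R := \sum_(p : P | e \in pth p) f p.

Definition path_cost (f : P -> R) (p : P) : R := \sum_(e <- pth p) ce e (load f e).

Definition feasible (M : R) : set (P -> R) :=
  [set f | (forall p, 0 <= f p) /\ \sum_(p : P) f p = M].

Definition wardrop (M : R) (f : P -> R) : Prop :=
  feasible M f /\ (forall p p', 0 < f p -> path_cost f p <= path_cost f p').

Definition social_cost (f : P -> R) : R :=
  \sum_(e : E) load f e * ce e (load f e).

Definition opt (M : R) : R := inf [set social_cost f | f in feasible M].

(* PoA(Gamma_M) computed from an equilibrium f (convention PoA = 1 if Opt = 0) *)
Definition poa (M : R) (f : P -> R) : R :=
  if opt M == 0 then 1 else social_cost f / opt M.

Definition alpha_net (alpha : E -> \bar R) : \bar R :=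
  (\big[mine/+oo]_(p : P) \big[maxe/-oo]_(e <- pth p) alpha e)%E.

Definition tight (alpha : E -> \bar R) : Prop :=
  (0 < alpha_net alpha < +oo)%E.
End Routing.

Definition regularly_varying_at_infty (R : realType) (g : R -> R) : Prop :=
  (forall t, 0 < t -> 0 < g t) /\
  (forall x : R, 0 < x -> exists2 l : R, l != 0 & g (t * x) / g t @[t --> +oo] --> l).

(* The monotone cost of an edge with [0 < alpha_e < +oo] upgrades the regular
   variation of [c] to [c (M s) / c M --> s ^ rho] for some [rho >= 0]
   (monotonicity replaces the measurability in Karamata's theorem).  On an edge
   with finite [alpha_e], [c_e (M s) / c M] then tends to [alpha_e s ^ rho], and
   convexity of [s ^ (rho + 1)] makes [x c_e x] lie above its tangent-like line
   at [y], of slope [(rho + 1) c_e y], up to [o (M c M)] uniformly on [[0, M]].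
   Adding [rho + 1] times the variational inequality of the equilibrium gives
   [Eq <= L (f) + o (M c M)] for every feasible [f]; edges with infinite [alpha_e]
   carry only [o (M)] load unless [f] is already worse than the equilibrium.
   Tightness puts [Opt] at the order of [M c M]: every path crosses an edge with
   [alpha_e >= alpha], one of which carries [M / |E|]. *)

From HB Require Import structures.
From mathcomp Require Import all_boot all_order all_algebra.
From mathcomp Require Import all_classical all_reals all_analysis.
From mathcomp Require Import ring lra.
Import Order.TTheory GRing.Theory Num.Theory.
Import numFieldNormedType.Exports.
Local Open Scope classical_set_scope.
Local Open Scope ring_scope.

Set Implicit Arguments. Unset Strict Implicit. Unset Printing Implicit Defensive.

Section PowerLaws.
Variable R : realType.

Lemma additive_monotone_linear (L : R -> R) :
  {morph L : u v / u + v} -> {homo L : u v / u <= v} -> forall u, L u = u * L 1.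
Proof.
move=> Ladd Lmon.
have L0 : L 0 = 0 by have := Ladd 0 0; rewrite addr0; lra.
have LN u : L (- u) = - L u by have := Ladd u (- u); rewrite subrr L0; lra.
have LMn (n : nat) u : L (n%:R * u) = n%:R * L u.
  elim: n => [|n IH]; first by rewrite !mul0r.
  by rewrite -natr1 !mulrDl !mul1r Ladd IH.
have Ln (n : nat) : L n%:R = n%:R * L 1 by rewrite -LMn mulr1.
have L1_ge0 : 0 <= L 1 by rewrite -L0 Lmon.
suff Lpos u : 0 <= u -> L u = u * L 1.
  move=> u; have [/Lpos //|u_lt0] := lerP 0 u.
  by rewrite -[u]opprK LN Lpos ?mulNr // oppr_ge0 ltW.
move=> u_ge0; set d := `|L u - u * L 1|.
(* sandwiching [n u] between consecutive integers gives [n d <= L 1] for all [n] *)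
have nd_le n : n%:R * d <= L 1.
  set m := Num.truncn (n%:R * u).
  have m_le : m%:R <= n%:R * u by rewrite truncn_le mulr_ge0.
  have m_gt : n%:R * u < m.+1%:R by apply: truncnS_gt.
  have Lm_le : m%:R * L 1 <= n%:R * L u by rewrite -Ln -LMn Lmon.
  have Lm_ge : n%:R * L u <= m.+1%:R * L 1 by rewrite -Ln -LMn Lmon // ltW.
  have := ler_wpM2r L1_ge0 m_le; have := ler_wpM2r L1_ge0 (ltW m_gt).
  rewrite -natr1 in Lm_ge *; rewrite /d -[n%:R]ger0_norm // -normrM ler_norml.
  by move=> h1 h2; apply/andP; split; nra.
apply/eqP; rewrite -subr_eq0 -normr_eq0 -/d eq_le normr_ge0 andbT leNgt.
apply/negP => d_gt0.
have /archi_boundP := divr_ge0 L1_ge0 (ltW d_gt0).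
by rewrite ltr_pdivrMr // => /lt_le_trans /(_ (nd_le _)); rewrite ltxx.
Qed.

Lemma expR_bernoulli (r u : R) : 0 <= r ->
  1 + (r + 1) * (expR u - 1) <= expR ((r + 1) * u).
Proof.
move=> r_ge0.
have eu_gt0 := expR_gt0 u.
have eru := expR_ge1Dx (r * u).
have euN : expR u * expR (- u) = 1 by rewrite -expRD subrr expR0.
have := expR_ge1Dx (- u); rewrite -(ler_pM2l eu_gt0) mulrDr mulr1 euN => eNu.
have -> : expR ((r + 1) * u) = expR (r * u) * expR u by rewrite mulrDl mul1r expRD.
have := ler_wpM2l (ltW eu_gt0) eru; nra.
Qed.

Lemma powR_tangent (r s t : R) : 0 <= r -> 0 <= s -> 0 < t ->
  (r + 1) * t `^ r * (s - t) <= s * s `^ r - t * t `^ r.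
Proof.
move=> r_ge0 s_ge0 t_gt0; have ttr_gt0 : 0 < t * t `^ r by rewrite mulr_gt0 ?powR_gt0.
have [->|s_neq0] := eqVneq s 0; first by rewrite !mul0r sub0r; nra.
have s_gt0 : 0 < s by rewrite lt0r s_neq0.
have powE x : 0 < x -> x * x `^ r = expR ((r + 1) * ln x).
  by move=> x_gt0; rewrite /powR gt_eqF // mulrDl mul1r expRD lnK // mulrC.
have -> : (r + 1) * t `^ r * (s - t) = t * t `^ r * ((r + 1) * (s / t - 1)).
  by field; rewrite gt_eqF.
have := expR_bernoulli (ln s - ln t) r_ge0.
rewrite expRB !lnK // -(ler_pM2l ttr_gt0) mulrDr mulr1 (powE s) // (powE t) //.
rewrite -expRD -mulrDr subrKC; lra.
Qed.

End PowerLaws.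

Section PinftyScaling.
Variable R : realType.

Lemma near_pinfty_scale (s : R) (P : R -> Prop) : 0 < s ->
  (\forall x \near +oo, P x) -> \forall x \near +oo, P (x * s).
Proof.
move=> s_gt0 [M [M_real PM]]; exists (M / s); split; first exact: num_real.
by move=> x; rewrite ltr_pdivrMr //; exact: PM.
Qed.

Lemma cvg_pinfty_scale (T : Type) (G : set_system T) (f : R -> T) (s : R) :
  0 < s -> f x @[x --> +oo] --> G -> f (x * s) @[x --> +oo] --> G.
Proof. by move=> s_gt0 fG A /fG; exact: near_pinfty_scale. Qed.

End PinftyScaling.

Lemma near_forall_leq (T : Type) (F : set_system T) (P : nat -> T -> Prop) (n : nat) :
  Filter F -> (forall i, (i <= n)%N -> \forall x \near F, P i x) ->
  \forall x \near F, forall i, (i <= n)%N -> P i x.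
Proof.
move=> FF FP; have := filter_forall FF (fun i : 'I_n.+1 => FP i (ltn_ord i)).
by apply: filterS => x Px i i_le; exact: (Px (Ordinal (i_le : (i < n.+1)%N))).
Qed.

Section TangentGap.
Variable R : realType.
Implicit Types (r a s t x y : R) (G : R -> R).

(* For [G x = a x^r] and [k = r + 1], this is the gap between the convex function
   [x G x] and its tangent line at [y]. *)
Definition tangent_gap (k : R) G x y := x * G x - y * G y - k * G y * (x - y).

Lemma tangent_gap_scale k G x y (M C : R) : 0 < M -> 0 < C ->
  tangent_gap k G x y = M * C * tangent_gap k (fun s => G (M * s) / C) (x / M) (y / M).
Proof.
move=> M_gt0 C_gt0; have MK z : M * (z / M) = z by rewrite mulrC divfK // lt0r_neq0.
by rewrite /tangent_gap !MK; field; rewrite !lt0r_neq0.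
Qed.

Lemma powR_le1 r x : 0 <= r -> 0 <= x <= 1 -> x `^ r <= 1.
Proof.
move=> r_ge0 /andP[x_ge0 x_le1].
have -> : 1 = 1 `^ r :> R by rewrite powR1.
by rewrite ge0_ler_powR // nnegrE.
Qed.

Lemma tangent_gap_powR_ge0 r a s t : 0 <= r -> 0 <= a -> 0 <= s -> 0 < t ->
  0 <= tangent_gap (r + 1) (fun x => a * x `^ r) s t.
Proof.
move=> r_ge0 a_ge0 s_ge0 t_gt0; have := powR_tangent r_ge0 s_ge0 t_gt0.
rewrite /tangent_gap; nra.
Qed.

(* For [t >= eta] the tangent inequality of [a x^r] survives the perturbation
   [E]; for [t < eta] every term is controlled by [G eta]. *)
Lemma tangent_gap_approx r a E eta G : 0 <= r -> 0 <= a -> 0 < eta <= 1 ->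
  {in `[0, 1] &, {homo G : x y / x <= y}} -> (forall x, 0 <= x -> 0 <= G x) ->
  (forall x, eta <= x <= 1 -> `|G x - a * x `^ r| <= E) ->
  forall s t, 0 <= s <= 1 -> 0 <= t <= 1 ->
  - ((4 * r + 3) * E + (r + 2) * (a * eta) + r * (a * eta `^ r))
    <= tangent_gap (r + 1) G s t.
Proof.
move=> r_ge0 a_ge0 /andP[eta_gt0 eta_le1] G_mono G_ge0 G_approx s t hs ht.
move: (hs) (ht) => /andP[s_ge0 s_le1] /andP[t_ge0 t_le1].
have eta1 : eta <= eta <= 1 by rewrite lexx eta_le1.
have E_ge0 : 0 <= E := le_trans (normr_ge0 _) (G_approx eta eta1).
have pow_le x : 0 <= x <= 1 -> a * x `^ r <= a.
  by move=> hx; rewrite ler_piMr // powR_le1.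
have Gs_ge0 := G_ge0 s s_ge0; have Gt_ge0 := G_ge0 t t_ge0.
have are_ge0 : 0 <= a * eta `^ r by rewrite mulr_ge0 ?powR_ge0.
have ae_ge0 : 0 <= a * eta by rewrite mulr_ge0 // ltW.
have gapE : tangent_gap (r + 1) G s t = s * G s + r * (t * G t) - (r + 1) * (s * G t).
  by rewrite /tangent_gap; ring.
have [eta_le_t|t_lt_eta] := lerP eta t.
  have t_gt0 := lt_le_trans eta_gt0 eta_le_t.
  have := tangent_gap_powR_ge0 r_ge0 a_ge0 s_ge0 t_gt0.
  have /G_approx : eta <= t <= 1 by rewrite eta_le_t t_le1.
  rewrite ler_norml => /andP[dt_ge dt_le].
  have sdt : - E <= s * (G t - a * t `^ r) <= E by apply/andP; split; nra.
  have tdt : - E <= t * (G t - a * t `^ r) <= E by apply/andP; split; nra.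
  have sds : - (E + a * eta) <= s * (G s - a * s `^ r).
    have [eta_le_s|s_lt_eta] := lerP eta s.
      have /G_approx : eta <= s <= 1 by rewrite eta_le_s s_le1.
      by rewrite ler_norml => /andP[? ?]; nra.
    have := pow_le s hs; have := ler_wpM2l (ltW eta_gt0) (pow_le s hs); nra.
  move: sdt tdt => /andP[sdt_ge sdt_le] /andP[tdt_ge tdt_le].
  have rtdt : r * - E <= r * (t * (G t - a * t `^ r)) by rewrite ler_wpM2l.
  have rsdt : (r + 1) * (s * (G t - a * t `^ r)) <= (r + 1) * E.
    by rewrite ler_wpM2l //; lra.
  have := mulr_ge0 r_ge0 E_ge0; have := mulr_ge0 r_ge0 ae_ge0.
  have := mulr_ge0 r_ge0 are_ge0; rewrite /tangent_gap; lra.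
have Gt_le : G t <= a * eta `^ r + E.
  have := G_approx eta eta1; rewrite ler_norml => /andP[_ h].
  apply: le_trans (_ : G eta <= _); last by lra.
  by apply: G_mono; rewrite ?in_itv /= ?t_ge0 ?t_le1 ?(ltW eta_gt0) ?eta_le1 ?(ltW t_lt_eta).
have rtGt : 0 <= r * (t * G t) by rewrite !mulr_ge0.
have := mulr_ge0 r_ge0 E_ge0; have := mulr_ge0 r_ge0 ae_ge0.
have := mulr_ge0 r_ge0 are_ge0; rewrite gapE.
have [t_le_s|s_lt_t] := lerP t s.
  have Gts : G t <= G s by apply: G_mono; rewrite ?in_itv /= ?t_ge0 ?t_le1 ?s_ge0.
  have := ler_wpM2l s_ge0 Gts; have := ler_wpM2l r_ge0 (ler_piMl Gt_ge0 s_le1).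
  have := ler_wpM2l r_ge0 Gt_le; lra.
have sGt : s * G t <= eta * (a * eta `^ r + E).
  by rewrite ler_pM // ltW // (lt_trans s_lt_t).
have : eta * (a * eta `^ r + E) <= a * eta + E.
  rewrite mulrDr mulrCA; apply: lerD; last by rewrite ler_piMl.
  by rewrite ler_wpM2l // ler_piMr ?(ltW eta_gt0) // powR_le1 // (ltW eta_gt0) eta_le1.
move/(le_trans sGt)/(ler_wpM2l (addr_ge0 r_ge0 ler01)).
have := mulr_ge0 s_ge0 Gs_ge0; lra.
Qed.

Lemma tangent_gap_small_loads (k m B : R) (g : R -> R) (x y : R) :
  0 <= k -> 0 <= x <= m -> 0 <= y <= m -> 0 <= g x -> 0 <= g y <= B ->
  - ((1 + k) * m * B) <= tangent_gap k g x y.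
Proof.
move=> k_ge0 /andP[x_ge0 x_le] /andP[y_ge0 y_le] gx_ge0 /andP[gy_ge0 gy_le].
have := ler_pM y_ge0 gy_ge0 y_le gy_le; have := mulr_ge0 x_ge0 gx_ge0.
have := ler_pM (mulr_ge0 k_ge0 gy_ge0) x_ge0 (ler_wpM2l k_ge0 gy_le) x_le.
have := mulr_ge0 (mulr_ge0 k_ge0 gy_ge0) y_ge0; rewrite /tangent_gap; lra.
Qed.

End TangentGap.

Section MonotoneGrid.
Variable R : realType.

Lemma nonincreasing_grid_index (u : nat -> R) (n : nat) (x : R) :
  (forall i, u i.+1 <= u i) -> u n.+1 <= x <= u 0 ->
  exists2 i, (i <= n)%N & u i.+1 <= x <= u i.
Proof.
move=> u_dec; elim: n => [|n IH] /andP[x_ge x_le]; first by exists 0%N; rewrite ?x_ge.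
have [x_ge'|x_lt] := lerP (u n.+1) x; last by exists n.+1; rewrite // x_ge ltW.
by have [|i i_le hi] := IH; [rewrite x_ge' x_le | exists i => //; exact: leqW].
Qed.

Lemma monotone_grid_approx (G H : R -> R) (u : nat -> R) (n : nat) (E d : R) :
  (forall i, u i.+1 <= u i) ->
  {in `[u n.+1, u 0] &, {homo G : x y / x <= y}} ->
  {in `[u n.+1, u 0] &, {homo H : x y / x <= y}} ->
  (forall i, (i <= n)%N -> H (u i) - H (u i.+1) <= d) ->
  (forall i, (i <= n.+1)%N -> `|G (u i) - H (u i)| <= E) ->
  forall x, u n.+1 <= x <= u 0 -> `|G x - H x| <= E + d.
Proof.
move=> u_dec G_mono H_mono H_step G_near x hx.
have [i i_le /andP[ui1_le x_le_ui]] := nonincreasing_grid_index u_dec hx.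
have u_in j : (j <= n.+1)%N -> u j \in `[u n.+1, u 0].
  move=> j_le; have u_nincr := (nonincreasing_seqP u).1 u_dec.
  by rewrite in_itv /= !u_nincr.
have x_in : x \in `[u n.+1, u 0] by rewrite in_itv.
have ui_in := u_in i (leqW i_le); have ui1_in := u_in i.+1 i_le.
have := G_near i (leqW i_le); have := G_near i.+1 i_le; rewrite !ler_norml.
move=> /andP[? ?] /andP[? ?].
have := H_step i i_le; have := G_mono _ _ x_in ui_in x_le_ui.
have := G_mono _ _ ui1_in x_in ui1_le; have := H_mono _ _ x_in ui_in x_le_ui.
have := H_mono _ _ ui1_in x_in ui1_le; move=> *; apply/andP; split; lra.
Qed.

Lemma mulr_expRN_le1 (x : R) : 0 <= x -> x * expR (- x) <= 1.
Proof.
move=> x_ge0; rewrite expRN ler_pdivrMr ?expR_gt0 // mul1r.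
by have := expR_ge1Dx x; lra.
Qed.

(* On the geometric grid [u i = exp (- th i)] the increments of [a x^r] are at
   most [a r th]; since [x exp (- x) <= 1], the last node [eta = u (N + 1)] makes
   [a eta] and [r a eta^r] at most [a / (th (N + 1))]. *)
Lemma tangent_gap_powR_grid (r a eps : R) : 0 <= r -> 0 <= a -> 0 < eps ->
  exists (n : nat) (u : nat -> R) (e : R), [/\ 0 < e, forall i, 0 < u i <= 1 &
  forall G : R -> R, {in `[0, 1] &, {homo G : x y / x <= y}} ->
    (forall x, 0 <= x -> 0 <= G x) ->
    (forall i, (i <= n)%N -> `|G (u i) - a * u i `^ r| <= e) ->
    forall s t, 0 <= s <= 1 -> 0 <= t <= 1 -> - eps <= tangent_gap (r + 1) G s t].
Proof.
move=> r_ge0 a_ge0 eps_gt0.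
pose e := eps / (9 * (r + 1)).
have e_gt0 : 0 < e by rewrite divr_gt0 // mulr_gt0 //; lra.
pose th := e / (a * r + 1).
have ar_ge0 : 0 <= a * r by rewrite mulr_ge0.
have th_gt0 : 0 < th by rewrite divr_gt0 //; lra.
have arth_le : a * r * th <= e.
  by rewrite /th mulrA ler_pdivrMr; nra.
have [N N_gt] : exists N : nat, a / (e * th) < N.+1%:R.
  by exists (Num.truncn (a / (e * th))); rewrite truncnS_gt.
pose u i := expR (- (th * i%:R)).
have u0 : u 0%N = 1 by rewrite /u mulr0 oppr0 expR0.
have u_dec i : u i.+1 <= u i.
  by rewrite ler_expR lerN2 ler_pM2l // ler_nat.
have u01 i : 0 < u i <= 1.
  by rewrite /u expR_gt0 expR_le1 oppr_le0 mulr_ge0 // ltW.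
have X_gt0 : 0 < th * N.+1%:R by rewrite mulr_gt0.
have a_le : a <= e * (th * N.+1%:R).
  by rewrite mulrA [leRHS]mulrC -ler_pdivrMr ?(mulr_gt0 e_gt0 th_gt0) // ltW.
have aeta_le : a * u N.+1 <= e.
  apply: le_trans (ler_wpM2r (ltW (expR_gt0 _)) a_le) _.
  by rewrite -mulrA ler_piMr ?(ltW e_gt0) // mulr_expRN_le1 // ltW.
have raeta_le : r * (a * u N.+1 `^ r) <= e.
  set X := th * N.+1%:R in X_gt0 a_le *.
  have rX_ge0 : 0 <= r * X := mulr_ge0 r_ge0 (ltW X_gt0).
  apply: le_trans (_ : e * (r * X * expR (- (r * X))) <= e).
    rewrite /u -expRM -/X (_ : - X * r = - (r * X)); last by ring.
    have := mulr_ge0 r_ge0 (expR_ge0 (- (r * X))); nra.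
  by rewrite ler_piMr ?(ltW e_gt0) // mulr_expRN_le1.
exists N.+1, u, e; split => // G G_mono G_ge0 G_near.
have in01 : {subset `[u N.+1, u 0%N] <= `[0, 1]}.
  move=> x; rewrite u0 !in_itv /= => /andP[x_ge ->]; rewrite andbT.
  by have /andP[/ltW/le_trans u_ge0 _] := u01 N.+1; exact: u_ge0.
have H_step i : (i <= N)%N -> a * u i `^ r - a * u i.+1 `^ r <= a * r * th.
  move=> _; rewrite /u -!expRM -mulrBr -mulrA ler_wpM2l //.
  have -> : expR (- (th * i.+1%:R) * r) = expR (- (th * i%:R) * r) * expR (- (r * th)).
    by rewrite -expRD -natr1; congr expR; ring.
  have := expR_ge1Dx (- (r * th)); have := expR_gt0 (- (th * i%:R) * r).
  have : expR (- (th * i%:R) * r) <= 1.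
    by rewrite expR_le1 mulNr oppr_le0 mulr_ge0 // mulr_ge0 // ltW.
  have := mulr_ge0 r_ge0 (ltW th_gt0).
  set w := r * th; nra.
have H_mono : {in `[u N.+1, u 0%N] &, {homo (fun x => a * x `^ r) : x y / x <= y}}.
  move=> x y /in01 + /in01; rewrite !in_itv /= => /andP[x_ge0 _] /andP[y_ge0 _] xy.
  by rewrite ler_wpM2l // ge0_ler_powR // nnegrE.
have := monotone_grid_approx u_dec (sub_in2 in01 G_mono) H_mono H_step G_near.
rewrite u0 => G_approx s t hs ht.
have := tangent_gap_approx r_ge0 a_ge0 (u01 N.+1) G_mono G_ge0 G_approx hs ht.
apply: le_trans; rewrite lerN2.
have epsE : eps = 9 * (r + 1) * e by rewrite /e mulrC divfK // lt0r_neq0 // mulr_gt0 //; lra.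
have := ler_wpM2l r_ge0 arth_le; have := mulr_ge0 r_ge0 (ltW e_gt0).
have := ler_wpM2l r_ge0 aeta_le; rewrite epsE; lra.
Qed.

End MonotoneGrid.

Section RegularVariation.
Variables (R : realType) (c : R -> R).
Hypothesis c_gt0 : forall t, 0 < t -> 0 < c t.

Lemma ratio_scale_cvg (g : R -> R) (a b s : R) : 0 < s ->
  g x / c x @[x --> +oo] --> a -> c (x * s) / c x @[x --> +oo] --> b ->
  g (x * s) / c x @[x --> +oo] --> a * b.
Proof.
move=> s_gt0 ga cb; apply: cvg_trans (cvgM (cvg_pinfty_scale s_gt0 ga) cb).
apply: near_eq_cvg; near=> x.
by rewrite /= mulrA divfK // gt_eqF // c_gt0 // mulr_gt0.
Unshelve. all: by end_near. Qed.

Lemma ratio_scale_cvgy (g : R -> R) (b s : R) : 0 < s -> 0 < b ->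
  g x / c x @[x --> +oo] --> +oo -> c (x * s) / c x @[x --> +oo] --> b ->
  g (x * s) / c x @[x --> +oo] --> +oo.
Proof.
move=> s_gt0 b_gt0 /(cvg_pinfty_scale s_gt0) /cvgryPgt gy cb; apply/cvgryPgt => A.
near=> x.
have cxs_gt0 : 0 < c (x * s) by rewrite c_gt0 // mulr_gt0.
have -> : g (x * s) / c x = g (x * s) / c (x * s) * (c (x * s) / c x).
  by rewrite mulrA divfK // lt0r_neq0.
apply: le_lt_trans (ler_norm A) _.
have -> : `|A| = 2 * `|A| / b * (b / 2) by field; rewrite gt_eqF.
apply: ltr_pM; rewrite ?divr_ge0 ?mulr_ge0 //; try lra; near: x.
  exact: gy.
by apply: (cvgr_gt _ cb); lra.
Unshelve. all: by end_near. Qed.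

Lemma ratio_cvg_bounded_below (g : R -> R) (a : R) :
  (forall x y, 0 <= x -> x <= y -> g x <= g y) -> 0 < a ->
  g x / c x @[x --> +oo] --> a -> exists2 gam, 0 < gam & \forall x \near +oo, gam <= c x.
Proof.
move=> g_mono a_gt0 ga.
have [x1 [x1_gt0 gx1]] : exists x1, 0 < x1 /\ a / 2 < g x1 / c x1.
  have [M [_ PM]] : \forall x \near +oo, 0 < x /\ a / 2 < g x / c x.
    by near=> x; split; near: x; [exact: nbhs_pinfty_gt | apply: (cvgr_gt _ ga); lra].
  by exists (`|M| + 1); apply: PM; have := ler_norm M; lra.
have gx1_gt0 : 0 < g x1.
  rewrite -(divfK (lt0r_neq0 (c_gt0 x1_gt0)) (g x1)) mulr_gt0 ?c_gt0 //; lra.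
exists (g x1 / (2 * a)); first by rewrite divr_gt0 ?mulr_gt0.
near=> x; have x_gt0 : 0 < x by near: x; exact: nbhs_pinfty_gt.
have : g x / c x < 2 * a by near: x; apply: (cvgr_lt _ ga); lra.
rewrite ler_pdivrMr ?mulr_gt0 // ltr_pdivrMr ?c_gt0 // mulrC => /ltW.
apply: le_trans; apply: g_mono; first exact: ltW.
by near: x; apply: nbhs_pinfty_ge; exact: num_real.
Unshelve. all: by end_near. Qed.

Lemma tangent_gap_eventually (g : R -> R) (a r eps : R) : 0 <= r -> 0 <= a -> 0 < eps ->
  (forall x y, 0 <= x -> x <= y -> g x <= g y) -> (forall x, 0 <= x -> 0 <= g x) ->
  (forall s, 0 < s -> g (x * s) / c x @[x --> +oo] --> a * s `^ r) ->
  \forall M \near +oo, forall x y, 0 <= x <= M -> 0 <= y <= M ->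
    - (eps * (M * c M)) <= tangent_gap (r + 1) g x y.
Proof.
move=> r_ge0 a_ge0 eps_gt0 g_mono g_ge0 g_cvg.
have [n [u [e [e_gt0 u01 gap_ge]]]] := tangent_gap_powR_grid r_ge0 a_ge0 eps_gt0.
have near_nodes : \forall M \near +oo,
    forall i, (i <= n)%N -> `|g (M * u i) / c M - a * u i `^ r| <= e.
  apply: near_forall_leq => i _; have /andP[ui_gt0 _] := u01 i.
  exact: (cvgrPdistC_le _ _).1 (g_cvg _ ui_gt0) e e_gt0.
near=> M; have M_gt0 : 0 < M by near: M; exact: nbhs_pinfty_gt.
have cM_gt0 := c_gt0 M_gt0.
move=> x y /andP[x_ge0 x_le] /andP[y_ge0 y_le].
rewrite (tangent_gap_scale _ _ _ _ M_gt0 cM_gt0).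
have -> : - (eps * (M * c M)) = M * c M * - eps by ring.
rewrite ler_pM2l ?mulr_gt0 //; apply: gap_ge.
- move=> s s'; rewrite !in_itv /= => /andP[s_ge0 _] /andP[s'_ge0 _] ss'.
  by rewrite ler_pM2r ?invr_gt0 // g_mono ?ler_pM2l // mulr_ge0 // ltW.
- by move=> s s_ge0; rewrite divr_ge0 ?g_ge0 ?mulr_ge0 // ltW.
- by near: M.
- by rewrite divr_ge0 ?(ltW M_gt0) //= ler_pdivrMr // mul1r.
- by rewrite divr_ge0 ?(ltW M_gt0) //= ler_pdivrMr // mul1r.
Unshelve. all: by end_near. Qed.

End RegularVariation.

(* The limit [l s] of [c (x s) / c x] is multiplicative and, through [g],
   monotone; so [ln \o l \o expR] is additive and monotone, hence linear. *)
Theorem regularly_varying_powR (R : realType) (c g : R -> R) (a : R) :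
  regularly_varying_at_infty c ->
  (forall x y, 0 <= x -> x <= y -> g x <= g y) -> 0 < a ->
  g x / c x @[x --> +oo] --> a ->
  exists2 rho, 0 <= rho & forall s, 0 < s -> c (x * s) / c x @[x --> +oo] --> s `^ rho.
Proof.
move=> [c_gt0 c_rv] g_mono a_gt0 ga.
pose l s := lim (c (x * s) / c x @[x --> +oo]).
have l_cvg s : 0 < s -> c (x * s) / c x @[x --> +oo] --> l s.
  by move=> s_gt0; have [b _ /cvgP] := c_rv s s_gt0.
have l_gt0 s : 0 < s -> 0 < l s.
  move=> s_gt0; have [b b_neq0 cb] := c_rv s s_gt0.
  rewrite lt0r {1}/l (cvg_lim _ cb) // b_neq0 /=.
  apply: ler_cvg_to (cvg_cst 0) (l_cvg s s_gt0) _; near=> x.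
  by rewrite divr_ge0 // ltW // c_gt0 // ?mulr_gt0 //; near: x; exact: nbhs_pinfty_gt.
have l_mono s s' : 0 < s -> s <= s' -> l s <= l s'.
  move=> s_gt0 ss'; have s'_gt0 := lt_le_trans s_gt0 ss'.
  rewrite -(ler_pM2l a_gt0); apply: ler_cvg_to (ratio_scale_cvg c_gt0 s_gt0 ga (l_cvg s s_gt0))
    (ratio_scale_cvg c_gt0 s'_gt0 ga (l_cvg s' s'_gt0)) _.
  near=> x; have x_gt0 : 0 < x by near: x; exact: nbhs_pinfty_gt.
  rewrite ler_pM2r ?invr_gt0 ?c_gt0 // g_mono ?ler_pM2l //.
  by rewrite mulr_ge0 // ltW.
have l_mul s s' : 0 < s -> 0 < s' -> l (s * s') = l s * l s'.
  move=> s_gt0 s'_gt0; rewrite [RHS]mulrC.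
  have := ratio_scale_cvg (g := fun x => c (x * s')) c_gt0 s_gt0
    (l_cvg s' s'_gt0) (l_cvg s s_gt0).
  under eq_cvg do rewrite -mulrA.
  exact: cvg_unique (l_cvg _ (mulr_gt0 s_gt0 s'_gt0)).
pose L u := ln (l (expR u)).
have L_add : {morph L : u v / u + v}.
  by move=> u v; rewrite /L expRD l_mul ?expR_gt0 // lnM // posrE l_gt0 // expR_gt0.
have L_mono : {homo L : u v / u <= v}.
  by move=> u v uv; rewrite /L ler_ln ?posrE ?l_gt0 ?expR_gt0 // l_mono ?expR_gt0 ?ler_expR.
have L_lin := additive_monotone_linear L_add L_mono.
exists (L 1); first by have := L_mono 0 1 ler01; rewrite L_lin mul0r.
move=> s s_gt0; suff <- : l s = s `^ L 1 by exact: l_cvg.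
by rewrite /powR gt_eqF // mulrC -L_lin /L [expR (ln s)]lnK ?posrE // lnK // posrE l_gt0.
Unshelve. all: by end_near. Qed.

Section Network.
Variables (R : realType) (E P : finType) (pth : P -> seq E) (ce : E -> R -> R).
Hypothesis pth_uniq : forall p, uniq (pth p).
Implicit Types (f fs : P -> R) (M : R).

Let nonneg f := forall p, 0 <= f p.

Lemma load_ge0 f e : nonneg f -> 0 <= load pth f e.
Proof. by move=> f_ge0; rewrite sumr_ge0. Qed.

Lemma load_le_sum f e : nonneg f -> load pth f e <= \sum_p f p.
Proof.
move=> f_ge0; rewrite [leRHS](bigID (fun p => e \in pth p)) /= lerDl.
by rewrite sumr_ge0.
Qed.

Lemma feasible_load_le M f e : feasible M f -> load pth f e <= M.
Proof. by case=> f_ge0 <-; exact: load_le_sum. Qed.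

Lemma sum_load_mul f (w : E -> R) :
  \sum_e load pth f e * w e = \sum_p f p * \sum_(e <- pth p) w e.
Proof.
under eq_bigr do rewrite mulr_suml.
rewrite (exchange_big_dep predT) //=; apply: eq_bigr => p _.
by rewrite big_uniq // mulr_sumr; apply: eq_bigl => e.
Qed.

Lemma social_costE f : social_cost pth ce f = \sum_p f p * path_cost pth ce f p.
Proof. exact: sum_load_mul. Qed.

Lemma exists_heavy_edge M f (S : pred E) : feasible M f -> 0 < M ->
  (forall p, exists2 e, e \in pth p & S e) ->
  exists2 e, S e & M / #|E|%:R <= load pth f e.
Proof.
move=> [f_ge0 f_sum] M_gt0 pS; apply: contrapT => light.
have [p _] : exists p : P, true.
  apply/not_existsP => noP; move: M_gt0; rewrite -f_sum big_pred0 ?ltxx //.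
  by move=> p; apply/negP => _; apply: (noP p).
have [e1 _ _] := pS p; have n_gt0 : (0 < #|E|)%N by apply/card_gt0P; exists e1.
have : M <= \sum_e load pth f e * (S e)%:R.
  rewrite sum_load_mul -f_sum; apply: ler_sum => q _; rewrite ler_peMr //.
  have [e e_in Se] := pS q; rewrite big_uniq // (bigD1 e) //= Se lerDl.
  by apply: sumr_ge0 => i _; case: (S i).
have : \sum_e load pth f e * (S e)%:R < \sum_(e : E) M / #|E|%:R.
  apply: ltr_sum; first by apply/hasP; exists e1; rewrite ?mem_index_enum.
  move=> e _; case: (boolP (S e)) => Se; last by rewrite mulr0 divr_gt0 ?ltr0n.
  by rewrite mulr1 ltNge; apply/negP => heavy; apply: light; exists e.
rewrite sumr_const -[_ *+ _]mulr_natr divfK ?pnatr_eq0 -?lt0n //; lra.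
Qed.

Hypothesis ce_ge0 : forall e x, 0 <= x -> 0 <= ce e x.
Hypothesis ce_mono : forall e x y, 0 <= x -> x <= y -> ce e x <= ce e y.

Lemma load_cost_le_social_cost f e : nonneg f ->
  load pth f e * ce e (load pth f e) <= social_cost pth ce f.
Proof.
move=> f_ge0; rewrite /social_cost (bigD1 e) //= lerDl.
by apply: sumr_ge0 => i _; rewrite mulr_ge0 ?load_ge0 // ce_ge0 // load_ge0.
Qed.

Lemma social_cost_ge_load f e (m : R) : nonneg f -> 0 <= m -> m <= load pth f e ->
  m * ce e m <= social_cost pth ce f.
Proof.
move=> f_ge0 m_ge0 m_le; apply: le_trans (load_cost_le_social_cost e f_ge0).
by apply: ler_pM => //; [exact: ce_ge0 | exact: ce_mono].
Qed.

Lemma path_cost_le_full_load M f p : feasible M f ->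
  path_cost pth ce f p <= \sum_(e <- pth p) ce e M.
Proof.
move=> f_feas; apply: ler_sum => e _; apply: ce_mono; last exact: feasible_load_le.
by apply: load_ge0; case: f_feas.
Qed.

Lemma wardrop_common_cost M fs : 0 < M -> wardrop pth ce M fs ->
  exists mu, [/\ forall p, 0 < fs p -> path_cost pth ce fs p = mu,
    forall p, mu <= path_cost pth ce fs p & social_cost pth ce fs = M * mu].
Proof.
move=> M_gt0 [[fs_ge0 fs_sum] fs_eq].
have [p1 p1_used] : exists p1, 0 < fs p1.
  apply: contrapT => unused; move: M_gt0; rewrite -fs_sum big1 ?ltxx // => p _.
  by apply/eqP; rewrite eq_le fs_ge0 andbT leNgt; apply/negP => ?; apply: unused; exists p.
exists (path_cost pth ce fs p1); split=> [p p_used|p|].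
- by apply/eqP; rewrite eq_le !fs_eq.
- exact: fs_eq.
rewrite social_costE -fs_sum mulr_suml; apply: eq_bigr => p _.
have [->|p_used] := eqVneq (fs p) 0; first by rewrite !mul0r.
by congr (_ * _); apply/eqP; rewrite eq_le !fs_eq // lt0r p_used fs_ge0.
Qed.

Lemma wardrop_social_cost_le M fs p : 0 < M -> wardrop pth ce M fs ->
  social_cost pth ce fs <= M * \sum_(e <- pth p) ce e M.
Proof.
move=> M_gt0 fs_eq; have [mu [_ mu_le ->]] := wardrop_common_cost M_gt0 fs_eq.
by rewrite ler_pM2l // (le_trans (mu_le p)) // (path_cost_le_full_load _ fs_eq.1).
Qed.

Lemma wardrop_edge_cost_le M fs e p : 0 < M -> wardrop pth ce M fs -> 0 < load pth fs e ->
  ce e (load pth fs e) <= \sum_(e' <- pth p) ce e' M.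
Proof.
move=> M_gt0 fs_eq used; have [mu [mu_used mu_le _]] := wardrop_common_cost M_gt0 fs_eq.
have [[fs_ge0 _] _] := fs_eq.
have [q /andP[e_in q_used]] : exists q, (e \in pth q) && (0 < fs q).
  apply: contrapT => unused; move: used; rewrite ltNge sumr_le0 // => q e_in.
  by rewrite leNgt; apply/negP => q_used; apply: unused; exists q; rewrite e_in.
apply: le_trans (path_cost_le_full_load p fs_eq.1).
apply: le_trans (mu_le p); rewrite -(mu_used q q_used) /path_cost big_uniq // (bigD1 e) //=.
by rewrite lerDl sumr_ge0 // => i _; rewrite ce_ge0 // load_ge0.
Qed.

Lemma wardrop_variational M fs f : 0 < M -> wardrop pth ce M fs -> feasible M f ->
  0 <= \sum_e ce e (load pth fs e) * (load pth f e - load pth fs e).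
Proof.
move=> M_gt0 fs_eq [f_ge0 f_sum].
have [mu [_ mu_le fs_cost]] := wardrop_common_cost M_gt0 fs_eq.
under eq_bigr do rewrite mulrBr.
rewrite sumrB subr_ge0.
have -> : \sum_e ce e (load pth fs e) * load pth fs e = social_cost pth ce fs.
  by apply: eq_bigr => e _; rewrite mulrC.
have -> : \sum_e ce e (load pth fs e) * load pth f e = \sum_p f p * path_cost pth ce fs p.
  by rewrite /path_cost -sum_load_mul; apply: eq_bigr => e _; rewrite mulrC.
rewrite fs_cost -f_sum mulr_suml; apply: ler_sum => p _; exact: ler_wpM2l.
Qed.

Lemma social_cost_le_tangent_gap M fs f (k B : R) : 0 < M -> 0 <= k ->
  wardrop pth ce M fs -> feasible M f ->
  (forall e, - B <= tangent_gap k (ce e) (load pth f e) (load pth fs e)) ->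
  social_cost pth ce fs <= social_cost pth ce f + #|E|%:R * B.
Proof.
move=> M_gt0 k_ge0 fs_eq f_feas gap_ge.
have := mulr_ge0 k_ge0 (wardrop_variational M_gt0 fs_eq f_feas).
have : \sum_(e : E) - B <= \sum_e tangent_gap k (ce e) (load pth f e) (load pth fs e).
  by apply: ler_sum => e _; exact: gap_ge.
have -> : \sum_e tangent_gap k (ce e) (load pth f e) (load pth fs e) =
    social_cost pth ce f - social_cost pth ce fs -
    k * \sum_e ce e (load pth fs e) * (load pth f e - load pth fs e).
  by rewrite mulr_sumr -!sumrB; apply: eq_bigr => e _; rewrite /tangent_gap mulrA.
rewrite sumr_const -mulr_natl; lra.
Qed.

(* On edges outside [fin] the equilibrium load is below [m], as is the load of
   [f] unless [f] alone already costs more than the equilibrium. *)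
Lemma social_cost_le_tangent_gap_split M fs f (fin : pred E) (k m L B : R) :
  0 < M -> 0 <= k -> 0 <= m -> (1 + k) * m * L <= B ->
  wardrop pth ce M fs -> feasible M f ->
  (forall e, ce e (load pth fs e) <= L) ->
  (forall e, ~~ fin e -> L < ce e m /\ social_cost pth ce fs <= m * ce e m) ->
  (forall e, fin e -> forall x y, 0 <= x <= M -> 0 <= y <= M ->
     - B <= tangent_gap k (ce e) x y) ->
  social_cost pth ce fs <= social_cost pth ce f + #|E|%:R * B.
Proof.
move=> M_gt0 k_ge0 m_ge0 B_ge fs_eq f_feas fs_cost infty_large fin_gap.
have [[fs_ge0 _] _] := fs_eq; have [f_ge0 _] := f_feas.
have L_ge0 (e : E) : 0 <= L.
  have ce_ge0' : 0 <= ce e (load pth fs e) by rewrite ce_ge0 ?load_ge0.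
  exact: le_trans ce_ge0' (fs_cost e).
have B_ge0 (e : E) : 0 <= B.
  by apply: le_trans B_ge; rewrite !mulr_ge0 ?(L_ge0 e) ?addr_ge0.
have [[e [infty_e f_heavy]]|f_light] :=
    pselect (exists e, ~~ fin e /\ m < load pth f e).
  have [_ fs_le] := infty_large e infty_e; apply: le_trans fs_le _.
  apply: le_trans (social_cost_ge_load f_ge0 m_ge0 (ltW f_heavy)) _.
  by rewrite lerDl mulr_ge0 ?B_ge0.
apply: (social_cost_le_tangent_gap M_gt0 k_ge0 fs_eq f_feas) => e.
have [fin_e|infty_e] := boolP (fin e).
  apply: fin_gap; rewrite ?load_ge0 //.
  - exact: feasible_load_le f_feas.
  - exact: feasible_load_le fs_eq.1.
have [L_lt _] := infty_large e infty_e.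
have fs_le : load pth fs e <= m.
  rewrite leNgt; apply/negP => heavy; move: L_lt; apply/negP; rewrite -leNgt.
  by apply: le_trans (fs_cost e); apply: ce_mono => //; exact: ltW.
have f_le : load pth f e <= m by rewrite leNgt; apply/negP => heavy; apply: f_light; exists e.
apply: le_trans (tangent_gap_small_loads (m := m) (B := L) k_ge0 _ _ _ _).
- by rewrite lerN2.
- by rewrite load_ge0.
- by rewrite load_ge0.
- by rewrite ce_ge0 ?load_ge0.
- by rewrite ce_ge0 ?load_ge0 ?fs_cost.
Qed.

Lemma opt_le_social_cost M f : feasible M f -> opt pth ce M <= social_cost pth ce f.
Proof.
move=> f_feas; apply: ge_inf; last by exists f.
exists 0 => _ [g [g_ge0 _] <-]; rewrite /social_cost sumr_ge0 // => e _.
by rewrite mulr_ge0 ?load_ge0 // ce_ge0 // load_ge0.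
Qed.

Lemma le_opt M (b : R) : (exists f, feasible M f) ->
  (forall f, feasible M f -> b <= social_cost pth ce f) -> b <= opt pth ce M.
Proof.
move=> [f f_feas] b_le; apply: lb_le_inf; first by exists (social_cost pth ce f), f.
by move=> _ [g g_feas <-]; exact: b_le.
Qed.

Lemma poa_sub1_le M f (b eps : R) : 0 < b -> b <= opt pth ce M ->
  opt pth ce M <= social_cost pth ce f -> social_cost pth ce f <= opt pth ce M + eps * b ->
  `|poa pth ce M f - 1| <= eps.
Proof.
move=> b_gt0 b_le opt_le sc_le; have opt_gt0 := lt_le_trans b_gt0 b_le.
rewrite /poa gt_eqF // -(divff (lt0r_neq0 opt_gt0)) -mulrBl normrM.
have eps_ge0 : 0 <= eps by rewrite -(pmulr_lge0 _ b_gt0); lra.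
rewrite ger0_norm ?subr_ge0 // gtr0_norm ?invr_gt0 // ler_pdivrMr //.
by apply: le_trans (_ : eps * b <= _); [lra | rewrite ler_wpM2l].
Qed.

End Network.

Section Tightness.
Variables (R : realType) (E P : finType) (pth : P -> seq E) (alpha : E -> \bar R).
Hypothesis alpha_tight : tight pth alpha.

Lemma tight_finite_path : exists p, forall e, e \in pth p -> (alpha e < +oo)%E.
Proof.
apply: contrapT => /forallNP no_finite; have /andP[_] := alpha_tight; apply/negP.
rewrite -leNgt /alpha_net; apply: le_bigmin => // p _.
have /existsNP[e /not_implyP[e_in /negP]] := no_finite p; rewrite -leNgt => alpha_e.
by apply: le_trans (le_bigmax_seq _ _ predT _ e_in _).
Qed.

Lemma tight_heavy_edge p : exists2 e, e \in pth p & (alpha_net pth alpha <= alpha e)%E.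
Proof.
apply: contrapT => /forall2NP light; have /andP[an_gt0 _] := alpha_tight.
have : (\big[maxe/-oo]_(e <- pth p) alpha e < alpha_net pth alpha)%E.
  rewrite big_seq_cond; apply: bigmax_lt => [|e /andP[e_in _]].
    by rewrite (lt_trans _ an_gt0) // ltNye.
  by have [//|/negP] := light e; rewrite -ltNge.
by rewrite ltNge /alpha_net bigmin_le.
Qed.

End Tightness.

Section Asymptotics.
Variables (R : realType) (E P : finType) (pth : P -> seq E) (ce : E -> R -> R).
Variables (c : R -> R) (alpha : E -> \bar R) (feq : R -> P -> R).
Hypothesis pth_uniq : forall p, uniq (pth p).
Hypothesis ce_ge0 : forall e x, 0 <= x -> 0 <= ce e x.
Hypothesis ce_mono : forall e x y, 0 <= x -> x <= y -> ce e x <= ce e y.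
Hypothesis c_rv : regularly_varying_at_infty c.
Hypothesis bench : forall e, (ce e x / c x)%:E @[x --> +oo] --> alpha e.
Hypothesis alpha_tight : tight pth alpha.
Hypothesis feq_wardrop : forall M, 0 < M -> wardrop pth ce M (feq M).

Let c_gt0 : forall t, 0 < t -> 0 < c t := c_rv.1.

Lemma ratio_ge0_eventually e : \forall x \near +oo, 0 <= ce e x / c x.
Proof.
near=> x; have x_gt0 : 0 < x by near: x; exact: nbhs_pinfty_gt.
by rewrite divr_ge0 // ?ce_ge0 // ltW // c_gt0.
Unshelve. all: by end_near. Qed.

Lemma alpha_ge0 e : (0 <= alpha e)%E.
Proof.
apply: cvge_to_ge (@bench e) _; apply: filterS (ratio_ge0_eventually e) => x.
by rewrite lee_fin.
Qed.

Lemma alpha_fin_cvg e : (alpha e < +oo)%E -> ce e x / c x @[x --> +oo] --> fine (alpha e).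
Proof.
move=> alpha_e_fin; have := @bench e.
rewrite -(fineK (_ : alpha e \is a fin_num)) ?ge0_fin_numE ?alpha_ge0 //.
by case/fine_cvgP.
Qed.

Lemma alpha_infty_cvgy e : alpha e = +oo%E -> ce e x / c x @[x --> +oo] --> +oo.
Proof.
move=> alpha_e_infty; have := @bench e; rewrite alpha_e_infty => /cvgeyPgtr ratio_y.
apply/cvgryPgt => A; apply: filterS (ratio_y A (num_real A)) => x.
by rewrite lte_fin.
Qed.

Lemma exists_comparison_edge : exists e, (alpha e < +oo)%E /\ 0 < fine (alpha e).
Proof.
have [p fin_p] := tight_finite_path alpha_tight.
have [e e_in heavy] := tight_heavy_edge alpha_tight p; exists e; split; first exact: fin_p.
have /andP[an_gt0 _] := alpha_tight; rewrite -lte_fin fineK ?(lt_le_trans an_gt0) //.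
by rewrite ge0_fin_numE ?alpha_ge0 ?fin_p.
Qed.

Lemma c_bounded_below : exists2 gam, 0 < gam & \forall x \near +oo, gam <= c x.
Proof.
have [e0 [fin_e0 alpha_e0_gt0]] := exists_comparison_edge.
apply: (ratio_cvg_bounded_below c_gt0 (@ce_mono e0) alpha_e0_gt0).
exact: alpha_fin_cvg.
Qed.

Lemma regular_variation_index :
  exists2 rho, 0 <= rho & forall s, 0 < s -> c (x * s) / c x @[x --> +oo] --> s `^ rho.
Proof.
have [e0 [fin_e0 alpha_e0_gt0]] := exists_comparison_edge.
apply: (regularly_varying_powR c_rv (@ce_mono e0) alpha_e0_gt0).
exact: alpha_fin_cvg.
Qed.

Lemma wardrop_cost_le_eventually : exists2 Lam, 0 <= Lam & \forall M \near +oo,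
  social_cost pth ce (feq M) <= Lam * (M * c M) /\
  forall e, ce e (load pth (feq M) e) <= Lam * c M.
Proof.
have [p fin_p] := tight_finite_path alpha_tight.
have [gam gam_gt0 c_ge] := c_bounded_below.
pose D := \sum_e ce e 0; pose Lam0 := \sum_(e <- pth p) (fine (alpha e) + 1).
have fine_ge0 e : 0 <= fine (alpha e) by rewrite fine_ge0 ?alpha_ge0.
have Lam0_ge0 : 0 <= Lam0 by rewrite sumr_ge0 // => e _; rewrite addr_ge0.
have D_ge0 : 0 <= D by rewrite sumr_ge0 // => e _; rewrite ce_ge0.
exists (Lam0 + D / gam); first by rewrite addr_ge0 // divr_ge0 // ltW.
have near_p : \forall M \near +oo,
    forall e, e \in pth p -> ce e M <= (fine (alpha e) + 1) * c M.
  apply: filter_forall => e; have [e_in|e_out] := boolP (e \in pth p); last first.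
    by apply: nearW => M /negP.
  near=> M; have M_gt0 : 0 < M by near: M; exact: nbhs_pinfty_gt.
  move=> _; rewrite -ler_pdivrMr ?c_gt0 //; apply: ltW; near: M.
  by apply: (cvgr_lt _ (alpha_fin_cvg (fin_p e e_in))); rewrite ltrDl.
near=> M; have M_gt0 : 0 < M by near: M; exact: nbhs_pinfty_gt.
have cM_gt0 := c_gt0 M_gt0; have feq_M := feq_wardrop M_gt0.
have p_le : forall e, e \in pth p -> ce e M <= (fine (alpha e) + 1) * c M by near: M.
have full_le : \sum_(e <- pth p) ce e M <= Lam0 * c M.
  rewrite /Lam0 mulr_suml big_seq_cond [leRHS]big_seq_cond.
  by apply: ler_sum => e /andP[e_in _]; exact: p_le.
have Lam0_le : Lam0 * c M <= (Lam0 + D / gam) * c M.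
  by apply: ler_wpM2r; [exact: ltW | rewrite lerDl divr_ge0 // ltW].
split=> [|e].
  apply: le_trans (wardrop_social_cost_le pth_uniq ce_mono p M_gt0 feq_M) _.
  by rewrite mulrCA ler_wpM2l ?(ltW M_gt0) // (le_trans full_le Lam0_le).
have [used|unused] := ltrP 0 (load pth (feq M) e).
  apply: le_trans (wardrop_edge_cost_le pth_uniq ce_ge0 ce_mono p M_gt0 feq_M used) _.
  exact: le_trans full_le Lam0_le.
have -> : load pth (feq M) e = 0.
  by apply/eqP; rewrite eq_le unused load_ge0 //; case: feq_M => -[].
apply: le_trans (_ : D <= _).
  by rewrite /D (bigD1 e) //= lerDl sumr_ge0 // => i _; rewrite ce_ge0.
have gam_le : gam <= c M by near: M.
have DcM : D <= D / gam * c M by rewrite mulrAC ler_pdivlMr // ler_wpM2l.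
by apply: le_trans DcM _; apply: ler_wpM2r; [exact: ltW | rewrite lerDr].
Unshelve. all: by end_near. Qed.

Section Index.
Variable rho : R.
Hypothesis rho_ge0 : 0 <= rho.
Hypothesis c_index : forall s, 0 < s -> c (x * s) / c x @[x --> +oo] --> s `^ rho.

Lemma edge_scale_cvg e s : (alpha e < +oo)%E -> 0 < s ->
  ce e (x * s) / c x @[x --> +oo] --> fine (alpha e) * s `^ rho.
Proof.
move=> fin_e s_gt0; apply: (ratio_scale_cvg c_gt0 s_gt0 _ (c_index s_gt0)).
exact: alpha_fin_cvg.
Qed.

Lemma edge_scale_cvgy e s : ~~ (alpha e < +oo)%E -> 0 < s ->
  ce e (x * s) / c x @[x --> +oo] --> +oo.
Proof.
move=> infty_e s_gt0.
apply: (ratio_scale_cvgy c_gt0 s_gt0 (powR_gt0 _ s_gt0) _ (c_index s_gt0)).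
by apply: alpha_infty_cvgy; apply/eqP; rewrite eq_le leey leNgt.
Qed.

Lemma infinite_edges_cost_gt_eventually (s A : R) : 0 < s ->
  \forall M \near +oo, forall e, ~~ (alpha e < +oo)%E -> A * c M < ce e (M * s).
Proof.
move=> s_gt0; apply: filter_forall => e.
have [infty_e|_] := boolP (~~ (alpha e < +oo)%E); last by apply: nearW => M /negP.
near=> M => _; have M_gt0 : 0 < M by near: M; exact: nbhs_pinfty_gt.
rewrite -ltr_pdivlMr ?c_gt0 //; near: M.
exact: (cvgryPgt _).1 (edge_scale_cvgy infty_e s_gt0) _.
Unshelve. all: by end_near. Qed.

Lemma finite_edges_tangent_gap_eventually eps : 0 < eps ->
  \forall M \near +oo, forall e, (alpha e < +oo)%E -> forall x y, 0 <= x <= M -> 0 <= y <= M ->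
    - (eps * (M * c M)) <= tangent_gap (rho + 1) (ce e) x y.
Proof.
move=> eps_gt0; apply: filter_forall => e.
have [fin_e|_] := boolP (alpha e < +oo)%E; last by apply: nearW => M /negP.
have := tangent_gap_eventually c_gt0 rho_ge0 (fine_ge0 (alpha_ge0 e)) eps_gt0
  (@ce_mono e) (@ce_ge0 e) (fun s s_gt0 => edge_scale_cvg fin_e s_gt0).
by apply: filterS => M gap _.
Qed.

Lemma opt_ge_eventually : exists2 kappa, 0 < kappa &
  \forall M \near +oo, kappa * (M * c M) <= opt pth ce M.
Proof.
have [p _] := tight_finite_path alpha_tight.
have [e1 _ _] := tight_heavy_edge alpha_tight p.
have /andP[an_gt0 an_fin] := alpha_tight.
set an := alpha_net pth alpha in an_gt0 an_fin *.
pose s0 := (#|E|%:R)^-1 : R.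
have s0_gt0 : 0 < s0 by rewrite invr_gt0 ltr0n; apply/card_gt0P; exists e1.
pose k0 := fine an * s0 `^ rho / 2.
have k0_gt0 : 0 < k0 by rewrite divr_gt0 // mulr_gt0 ?powR_gt0 // fine_gt0 // an_gt0.
have heavy_large : \forall M \near +oo,
    forall e, (an <= alpha e)%E -> k0 * c M < ce e (M * s0).
  apply: filter_forall => e; have [heavy|_] := boolP (an <= alpha e)%E; last first.
    by apply: nearW => M /negP.
  near=> M => _; have M_gt0 : 0 < M by near: M; exact: nbhs_pinfty_gt.
  rewrite -ltr_pdivlMr ?c_gt0 //; near: M.
  have [fin_e|infty_e] := boolP (alpha e < +oo)%E; last first.
    exact: (cvgryPgt _).1 (edge_scale_cvgy infty_e s0_gt0) k0.
  apply: (cvgr_gt _ (edge_scale_cvg fin_e s0_gt0)).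
  have an_le : fine an <= fine (alpha e).
    by rewrite fine_le // ge0_fin_numE ?fin_e ?an_fin // ?alpha_ge0 // ltW.
  have pos : 0 < fine an * s0 `^ rho by rewrite mulr_gt0 ?powR_gt0 // fine_gt0 // an_gt0.
  apply: lt_le_trans (_ : fine an * s0 `^ rho <= _); last by rewrite ler_pM2r ?powR_gt0.
  by rewrite /k0 ltr_pdivrMr //; lra.
exists (s0 * k0); first exact: mulr_gt0.
near=> M; have M_gt0 : 0 < M by near: M; exact: nbhs_pinfty_gt.
have heavyM : forall e, (an <= alpha e)%E -> k0 * c M < ce e (M * s0) by near: M.
apply: le_opt; first by exists (feq M); exact: (feq_wardrop M_gt0).1.
move=> f f_feas.
have [e heavy e_load] :=
  exists_heavy_edge pth_uniq f_feas M_gt0 (tight_heavy_edge alpha_tight).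
have Ms0_ge0 : 0 <= M * s0 by rewrite mulr_ge0 // ltW.
apply: le_trans (social_cost_ge_load ce_ge0 ce_mono f_feas.1 Ms0_ge0 (e_load : M * s0 <= _)).
rewrite (_ : s0 * k0 * (M * c M) = M * s0 * (k0 * c M)); last by ring.
by rewrite ler_wpM2l // ltW // heavyM.
Unshelve. all: by end_near. Qed.

Lemma wardrop_social_cost_le_eventually eps : 0 < eps ->
  \forall M \near +oo, forall f, feasible M f ->
  social_cost pth ce (feq M) <= social_cost pth ce f + eps * (M * c M).
Proof.
move=> eps_gt0; have [Lam Lam_ge0 feq_le] := wardrop_cost_le_eventually.
pose n := #|E|%:R : R; pose eps' := eps / (n + 1).
have n_ge0 : 0 <= n := ler0n _ _.
have eps'_gt0 : 0 < eps' by rewrite divr_gt0 //; lra.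
have k_ge0 : 0 <= rho + 1 by rewrite addr_ge0.
have kLam_ge0 : 0 <= (1 + (rho + 1)) * Lam by rewrite mulr_ge0 //; lra.
pose del := eps' / ((1 + (rho + 1)) * Lam + 1).
have del_gt0 : 0 < del by rewrite divr_gt0 //; lra.
have del_small : (1 + (rho + 1)) * Lam * del <= eps'.
  by rewrite /del mulrA ler_pdivrMr; nra.
have fin_gap := finite_edges_tangent_gap_eventually eps'_gt0.
have infty_large := infinite_edges_cost_gt_eventually (Lam / del + Lam) del_gt0.
near=> M; have M_gt0 : 0 < M by near: M; exact: nbhs_pinfty_gt.
have cM_gt0 := c_gt0 M_gt0; have Mdel_ge0 : 0 <= M * del by rewrite mulr_ge0 // ltW.
have [sc_le edge_le] : social_cost pth ce (feq M) <= Lam * (M * c M) /\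
  forall e, ce e (load pth (feq M) e) <= Lam * c M by near: M.
have infty_M : forall e, ~~ (alpha e < +oo)%E -> (Lam / del + Lam) * c M < ce e (M * del).
  by near: M.
have fin_M : forall e, (alpha e < +oo)%E -> forall x y, 0 <= x <= M -> 0 <= y <= M ->
  - (eps' * (M * c M)) <= tangent_gap (rho + 1) (ce e) x y by near: M.
move=> f f_feas; apply: le_trans (social_cost_le_tangent_gap_split pth_uniq ce_ge0 ce_mono
  (fin := fun e => (alpha e < +oo)%E) (B := eps' * (M * c M)) M_gt0 k_ge0 Mdel_ge0 _
  (feq_wardrop M_gt0) f_feas edge_le _ _) _.
- rewrite (_ : _ * _ * _ = (1 + (rho + 1)) * Lam * del * (M * c M)); last by ring.
  by rewrite ler_wpM2r // ltW // mulr_gt0.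
- move=> e /infty_M large; split.
    apply: le_lt_trans large; apply: ler_wpM2r; first exact: ltW.
    by rewrite lerDr divr_ge0 // ltW.
  apply: le_trans sc_le _; apply: le_trans (ler_wpM2l Mdel_ge0 (ltW large)).
  have -> : M * del * ((Lam / del + Lam) * c M) = Lam * (M * c M) + del * Lam * (M * c M).
    by field; rewrite lt0r_neq0.
  by rewrite lerDl (mulr_ge0 (mulr_ge0 (ltW del_gt0) Lam_ge0) (ltW (mulr_gt0 M_gt0 cM_gt0))).
- exact: fin_M.
rewrite lerD2l mulrA -/n; apply: ler_wpM2r; first by rewrite mulr_ge0 // ltW.
by rewrite /eps' mulrA ler_pdivrMr; nra.
Unshelve. all: by end_near. Qed.

End Index.

Theorem poa_cvg1 : poa pth ce M (feq M) @[M --> +oo] --> (1 : R).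
Proof.
have [rho rho_ge0 c_index] := regular_variation_index.
have [kappa kappa_gt0 opt_ge] := opt_ge_eventually c_index.
apply/cvgrPdistC_le => eps eps_gt0.
have near_opt :=
  wardrop_social_cost_le_eventually rho_ge0 c_index (mulr_gt0 eps_gt0 kappa_gt0).
near=> M; have M_gt0 : 0 < M by near: M; exact: nbhs_pinfty_gt.
have feq_feas := (feq_wardrop M_gt0).1.
have b_gt0 : 0 < kappa * (M * c M) by rewrite !mulr_gt0 ?c_gt0.
apply: (poa_sub1_le b_gt0); first by near: M.
  exact: (opt_le_social_cost pth ce_ge0 feq_feas).
rewrite -lerBlDr; apply: le_opt; first by exists (feq M).
move=> f f_feas; rewrite lerBlDr mulrA; move: f f_feas; near: M.
Unshelve. all: by end_near. Qed.

End Asymptotics.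

Theorem theorem4p6 (R : realType) (V E P : finType) (src tgt : E -> V) (o d : V)
  (pth : P -> seq E)
  (Hpaths : forall p, is_od_path src tgt o d (pth p))
  (Hinj : injective pth) (HPne : (0 < #|P|)%N)
  (ce : E -> R -> R)
  (Hcont : forall e, {within `[0, +oo[, continuous ce e})
  (Hmono : forall e (x y : R), 0 <= x -> x <= y -> ce e x <= ce e y)
  (Hnneg : forall e (x : R), 0 <= x -> 0 <= ce e x)
  (c : R -> R) (Hc : regularly_varying_at_infty c)
  (alpha : E -> \bar R)
  (Hbench : forall e, (ce e x / c x)%:E @[x --> +oo] --> alpha e)
  (Htight : tight pth alpha)
  (feq : R -> P -> R) (Heq : forall M : R, 0 < M -> wardrop pth ce M (feq M)) :
  poa pth ce M (feq M) @[M --> +oo] --> (1 : R).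
Proof.
(* Continuity, injectivity of [pth] and [P != set0] only matter for the
   existence of the equilibria, which are given as [feq]. *)
have pth_uniq p : uniq (pth p).
  by have [_ _ /= /andP[_ /map_uniq]] := Hpaths p.
exact: poa_cvg1 pth_uniq Hnneg Hmono Hc Hbench Htight Heq.
Qed.
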